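(* Let $\mathcal E$ be a centered $\mathcal A$-$\mathcal A$-bimodule and $\sigma^{\rm can}$ its canonical flip. For $(i,j)\in\{(1,2),(1,3),(2,3)\}$ let $P^{\rm can}_{ij}=\frac12(1+\sigma^{\rm can}_{ij})$ on $\mathcal E\otimes_{\mathcal A}\mathcal E\otimes_{\mathcal A}\mathcal E$. Then $P^{\rm can}_{12}|_{\mathrm{Ran}(P^{\rm can}_{23})}:\mathrm{Ran}(P^{\rm can}_{23})\to\mathrm{Ran}(P^{\rm can}_{12})$ and $P^{\rm can}_{23}|_{\mathrm{Ran}(P^{\rm can}_{12})}:\mathrm{Ran}(P^{\rm can}_{12})\to\mathrm{Ran}(P^{\rm can}_{23})$ are bimodule isomorphisms.
   Context: $\mathcal A$ is a complex unital $*$-subalgebra of a $C^*$-algebra. The center of a bimodule is $\mathcal Z(\mathcal E)=\{e\in\mathcal E: ea=ae\ \forall a\in\mathcal A\}$; $\mathcal E$ is centered if the right $\mathcal A$-linear span of $\mathcal Z(\mathcal E)$ is $\mathcal E$. For centered $\mathcal E$, $\sigma^{\rm can}$ is the unique $\mathcal A$-bimodule isomorphism of $\mathcal E\otimes_{\mathcal A}\mathcal E$ with $\sigma^{\rm can}(\omega\otimes\eta)=\eta\otimes\omega$ for $\omega,\eta\in\mathcal Z(\mathcal E)$ (it exists, and $(\sigma^{\rm can})^2=\mathrm{id}$). $\sigma^{\rm can}_{12}=\sigma^{\rm can}\otimes\mathrm{id}$, $\sigma^{\rm can}_{23}=\mathrm{id}\otimes\sigma^{\rm can}$, $\sigma^{\rm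 can}_{13}=\sigma^{\rm can}_{12}\sigma^{\rm can}_{23}\sigma^{\rm can}_{12}$. *)

From HB Require Import structures.
From mathcomp Require Import all_boot all_order all_algebra.
From mathcomp Require Import reals.
From mathcomp Require Import complex.
Set Implicit Arguments. Unset Strict Implicit. Unset Printing Implicit Defensive.
Import Order.TTheory GRing.Theory Num.Theory.
Local Open Scope ring_scope.

Record bimod_on (A : nzRingType) (E : zmodType) := BiMod {
  lact : A -> E -> E;
  ract : E -> A -> E;
  lactDr : forall a e1 e2, lact a (e1 + e2) = lact a e1 + lact a e2;
  lactDl : forall a b e, lact (a + b) e = lact a e + lact b e;
  lactM  : forall a b e, lact (a * b) e = lact a (lact b e);
  lact1  : forall e, lact 1 e = e;
  ractDl : forall e1 e2 a, ract (e1 + e2) a = ract e1 a + ract e2 a;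
  ractDr : forall e a b, ract e (a + b) = ract e a + ract e b;
  ractM  : forall e a b, ract e (a * b) = ract (ract e a) b;
  ract1  : forall e, ract e 1 = e;
  lractA : forall a e b, lact a (ract e b) = ract (lact a e) b }.

Definition additive_map (U V : zmodType) (f : U -> V) : Prop :=
  forall x y, f (x + y) = f x + f y.

Definition biadditive (U V W : zmodType) (f : U -> V -> W) : Prop :=
  (forall u1 u2 v, f (u1 + u2) v = f u1 v + f u2 v) /\
  (forall u v1 v2, f u (v1 + v2) = f u v1 + f u v2).

Definition balanced (A : nzRingType) (U V : zmodType) (bU : bimod_on A U)
  (bV : bimod_on A V) (W : Type) (f : U -> V -> W) : Prop :=
  forall u a v, f (ract bU u a) v = f u (lact bV a v).

Definition is_tensor (A : nzRingType) (U V T : zmodType) (bU : bimod_on A U)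
  (bV : bimod_on A V) (bT : bimod_on A T) (t : U -> V -> T) : Prop :=
  [/\ biadditive t, balanced bU bV t,
      (forall a u v, lact bT a (t u v) = t (lact bU a u) v),
      (forall u v a, ract bT (t u v) a = t u (ract bV v a)) &
      (forall (M : zmodType) (phi : U -> V -> M),
          biadditive phi -> balanced bU bV phi ->
          exists h : T -> M,
            [/\ additive_map h, (forall u v, h (t u v) = phi u v) &
                (forall h' : T -> M, additive_map h' ->
                   (forall u v, h' (t u v) = phi u v) -> forall x, h' x = h x)])].

Definition bimod_hom (A : nzRingType) (U V : zmodType) (bU : bimod_on A U)
  (bV : bimod_on A V) (f : U -> V) : Prop :=
  [/\ additive_map f,
      (forall a u, f (lact bU a u) = lact bV a (f u)) &
      (forall u a, f (ract bU u a) = ract bV (f u) a)].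

Definition center (A : nzRingType) (E : zmodType) (bE : bimod_on A E) (e : E) : Prop :=
  forall a, lact bE a e = ract bE e a.

Definition centered (A : nzRingType) (E : zmodType) (bE : bimod_on A E) : Prop :=
  forall e : E, exists n (z : 'I_n -> E) (a : 'I_n -> A),
    (forall i, center bE (z i)) /\ e = \sum_(i < n) ract bE (z i) (a i).

Definition Ran (T U : Type) (f : T -> U) (y : U) : Prop := exists x, y = f x.

(* f restricted to the subset S is a bimodule isomorphism onto the subset S'
   (S, S' are sub-bimodules in the intended use; f is a bimodule map of the
   ambient bimodules). *)
Definition bimod_iso_on (A : nzRingType) (U V : zmodType) (bU : bimod_on A U)
  (bV : bimod_on A V) (f : U -> V) (S : U -> Prop) (S' : V -> Prop) : Prop :=
  [/\ bimod_hom bU bV f,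
      (forall x, S x -> S' (f x)),
      (forall x y, S x -> S y -> f x = f y -> x = y) &
      (forall y, S' y -> exists2 x, S x & f x = y)].

Definition halfsym (R : rcfType) (A : algType R[i]) (T : zmodType)
  (bT : bimod_on A T) (s : T -> T) (x : T) : T :=
  lact bT ((2 : R[i])^-1)%:A (x + s x).

(** The canonical flip [s] of a centered bimodule is an involutive bimodule
    map, so the ranges of [P12] and [P23] are exactly the fixed spaces of
    [s12] and [s23]; a triple-tensor map is determined by its values on
    products of central elements, where [s12] and [s23] act as
    transpositions, so they also satisfy the braid relation
    [s12 s23 s12 = s23 s12 s23].  For involutions [a], [c] with this relation
    and [2] invertible, [P_a = (1 + a)/2] restricts to a bijection from
    [Fix c] onto [Fix a]: if [d] is fixed by [c] and [P_a d = 0] then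
    [a d = -d], and the braid relation forces [d = -d]; an element [y] of
    [Fix a] is reached from [y + c y - a (c y)] in [Fix c]. *)
From HB Require Import structures.
From mathcomp Require Import all_boot all_order all_algebra.
From mathcomp Require Import reals.
From mathcomp Require Import complex.
Set Implicit Arguments. Unset Strict Implicit. Unset Printing Implicit Defensive.
Import Order.TTheory GRing.Theory Num.Theory.
Local Open Scope ring_scope.

Section AdditiveMap.
Variables (U V : zmodType) (f : U -> V).
Hypothesis fA : additive_map f.

Lemma additive_map0 : f 0 = 0.
Proof. by apply: (addrI (f 0)); rewrite -fA !addr0. Qed.

Lemma additive_mapN x : f (- x) = - f x.
Proof. by apply: (addrI (f x)); rewrite -fA !subrr additive_map0. Qed.

Lemma additive_mapB x y : f (x - y) = f x - f y.
Proof. by rewrite fA additive_mapN. Qed.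

End AdditiveMap.

Section BimodHom.
Variables (A : nzRingType) (U V W : zmodType).
Variables (bU : bimod_on A U) (bV : bimod_on A V) (bW : bimod_on A W).

Lemma bimod_hom_id : bimod_hom bU bU id.
Proof. by []. Qed.

Lemma bimod_hom_comp (f : V -> W) (g : U -> V) :
  bimod_hom bV bW f -> bimod_hom bU bV g -> bimod_hom bU bW (f \o g).
Proof.
case=> fA fL fR [gA gL gR]; split=> [x y | a x | x a] /=.
- by rewrite gA fA.
- by rewrite gL fL.
- by rewrite gR fR.
Qed.

End BimodHom.

Lemma center_ext (A : nzRingType) (E M : zmodType) (bE : bimod_on A E)
  (G1 G2 : E -> M) : centered bE -> additive_map G1 -> additive_map G2 ->
  (forall z a, center bE z -> G1 (ract bE z a) = G2 (ract bE z a)) ->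
  forall e, G1 e = G2 e.
Proof.
move=> cE G1A G2A G12 e; have [n [z [a [zC ->]]]] := cE e.
elim: n z a zC => [|n IHn] z a zC.
  by rewrite !big_ord0 (additive_map0 G1A) (additive_map0 G2A).
by rewrite big_ord_recr /= G1A G2A IHn ?G12.
Qed.

Section TensorExt.
Variables (A : nzRingType) (U V T : zmodType).
Variables (bU : bimod_on A U) (bV : bimod_on A V) (bT : bimod_on A T).
Variable t : U -> V -> T.
Hypothesis tT : is_tensor bU bV bT t.

Lemma tensor_ext (M : zmodType) (F1 F2 : T -> M) :
  additive_map F1 -> additive_map F2 ->
  (forall u v, F1 (t u v) = F2 (t u v)) -> forall x, F1 x = F2 x.
Proof.
case: tT => [[tDl tDr] tB _ _ tU] F1A F2A F12 x.
have [|| h [_ _ hU]] := tU M (fun u v => F1 (t u v)).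
- by split=> *; rewrite ?tDl ?tDr F1A.
- by move=> u a v; rewrite tB.
by rewrite (hU F1) // (hU F2).
Qed.

Lemma tensor_ext_centerl (M : zmodType) (F1 F2 : T -> M) :
  centered bU -> additive_map F1 -> additive_map F2 ->
  (forall z v, center bU z -> F1 (t z v) = F2 (t z v)) ->
  forall x, F1 x = F2 x.
Proof.
move=> cU F1A F2A F12; apply: tensor_ext => // u v.
have [[tDl _] tB _ _ _] := tT.
move: u; apply: (center_ext (G1 := F1 \o t^~ v) (G2 := F2 \o t^~ v) cU).
- by move=> u w /=; rewrite tDl F1A.
- by move=> u w /=; rewrite tDl F2A.
by move=> z a zC /=; rewrite tB F12.
Qed.

(** [F (t u (z a)) = F (t u z) a], so right [A]-linearity lets the
    coefficients of the central generators of [V] pass through [F]. *)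
Lemma tensor_ext_centerr (M : zmodType) (bM : bimod_on A M) (F1 F2 : T -> M) :
  centered bV -> additive_map F1 -> additive_map F2 ->
  (forall x a, F1 (ract bT x a) = ract bM (F1 x) a) ->
  (forall x a, F2 (ract bT x a) = ract bM (F2 x) a) ->
  (forall u z, center bV z -> F1 (t u z) = F2 (t u z)) ->
  forall x, F1 x = F2 x.
Proof.
move=> cV F1A F2A F1R F2R F12; apply: tensor_ext => // u.
have [[_ tDr] _ _ tR _] := tT.
apply: (center_ext (G1 := F1 \o t u) (G2 := F2 \o t u) cV).
- by move=> v w /=; rewrite tDr F1A.
- by move=> v w /=; rewrite tDr F2A.
by move=> z a zC /=; rewrite -tR F1R F2R F12.
Qed.

End TensorExt.

Lemma tensor_map_hom (A : nzRingType) (U V T : zmodType) (bU : bimod_on A U)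
  (bV : bimod_on A V) (bT : bimod_on A T) (t : U -> V -> T)
  (f : U -> U) (g : V -> V) (s : T -> T) :
  is_tensor bU bV bT t -> bimod_hom bU bU f -> bimod_hom bV bV g ->
  additive_map s -> (forall u v, s (t u v) = t (f u) (g v)) ->
  bimod_hom bT bT s.
Proof.
move=> tT [_ fL _] [_ _ gR] sA st.
have [_ _ tL tR _] := tT.
have lactA k : additive_map (lact bT k) by move=> x y; apply: lactDr.
have ractA k : additive_map (ract bT ^~ k) by move=> x y; apply: ractDl.
split=> // [k | x k]; [apply: (tensor_ext tT) | move: x; apply: (tensor_ext tT)].
- by move=> x y /=; rewrite lactA sA.
- by move=> x y /=; rewrite sA lactA.
- by move=> u v; rewrite tL !st fL tL.
- by move=> x y /=; rewrite ractA sA.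
- by move=> x y /=; rewrite sA ractA.
- by move=> u v /=; rewrite tR !st gR tR.
Qed.

Section CanonicalFlip.
Variables (A : nzRingType) (E T2 T3 : zmodType).
Variables (bE : bimod_on A E) (b2 : bimod_on A T2) (b3 : bimod_on A T3).
Variables (t2 : E -> E -> T2) (m : T2 -> E -> T3) (m' : E -> T2 -> T3).
Variables (sig : T2 -> T2) (s12 s23 : T3 -> T3).
Hypothesis cE : centered bE.
Hypothesis t2T : is_tensor bE bE b2 t2.
Hypothesis mT : is_tensor b2 bE b3 m.
Hypothesis m'T : is_tensor bE b2 b3 m'.
Hypothesis mm' : forall e f g, m (t2 e f) g = m' e (t2 f g).
Hypothesis sigH : bimod_hom b2 b2 sig.
Hypothesis sig_center : forall w h, center bE w -> center bE h -> sig (t2 w h) = t2 h w.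
Hypothesis s12A : additive_map s12.
Hypothesis s12m : forall x g, s12 (m x g) = m (sig x) g.
Hypothesis s23A : additive_map s23.
Hypothesis s23m : forall e y, s23 (m' e y) = m' e (sig y).

(** With [z3] central, [m (t2 z1 (z2 a)) z3 = m (t2 z1 z2) (z3 a)], so only
    the first two factors need a left-to-right passage of coefficients. *)
Lemma triple_tensor_ext (F1 F2 : T3 -> T3) :
  bimod_hom b3 b3 F1 -> bimod_hom b3 b3 F2 ->
  (forall z1 z2 z3, center bE z1 -> center bE z2 -> center bE z3 ->
     F1 (m (t2 z1 z2) z3) = F2 (m (t2 z1 z2) z3)) ->
  forall x, F1 x = F2 x.
Proof.
case=> F1A _ F1R [F2A _ F2R] F12.
apply: (tensor_ext_centerr mT cE) => // x z3 z3C.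
have [[_ t2Dr] _ _ t2R _] := t2T.
have [[mDl _] mB _ mR _] := mT.
have mA (F : T3 -> T3) : additive_map F -> additive_map (F \o m^~ z3).
  by move=> FA u w /=; rewrite mDl FA.
move: x; apply: (tensor_ext_centerl t2T cE (mA _ F1A) (mA _ F2A)) => z1 v z1C /=.
move: v; apply: (center_ext (G1 := F1 \o m^~ z3 \o t2 z1)
                            (G2 := F2 \o m^~ z3 \o t2 z1) cE).
- by move=> v w /=; rewrite t2Dr mDl F1A.
- by move=> v w /=; rewrite t2Dr mDl F2A.
by move=> z2 c z2C /=; rewrite -t2R mB z3C -mR F1R F2R F12.
Qed.

Lemma s12_hom : bimod_hom b3 b3 s12.
Proof. exact: (tensor_map_hom mT sigH (bimod_hom_id bE)). Qed.

Lemma s23_hom : bimod_hom b3 b3 s23.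
Proof. exact: (tensor_map_hom m'T (bimod_hom_id bE) sigH). Qed.

Lemma s12_center z1 z2 g : center bE z1 -> center bE z2 ->
  s12 (m (t2 z1 z2) g) = m (t2 z2 z1) g.
Proof. by move=> z1C z2C; rewrite s12m sig_center. Qed.

Lemma s23_center e z2 z3 : center bE z2 -> center bE z3 ->
  s23 (m (t2 e z2) z3) = m (t2 e z3) z2.
Proof. by move=> z2C z3C; rewrite !mm' s23m sig_center. Qed.

Lemma s12K x : s12 (s12 x) = x.
Proof.
apply: (triple_tensor_ext (F1 := s12 \o s12) (F2 := id)) => //.
  exact: bimod_hom_comp s12_hom s12_hom.
by move=> z1 z2 z3 z1C z2C _ /=; rewrite !s12_center.
Qed.

Lemma s23K x : s23 (s23 x) = x.
Proof.
apply: (triple_tensor_ext (F1 := s23 \o s23) (F2 := id)) => //.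
  exact: bimod_hom_comp s23_hom s23_hom.
by move=> z1 z2 z3 _ z2C z3C /=; rewrite !s23_center.
Qed.

Lemma s12_braid x : s12 (s23 (s12 x)) = s23 (s12 (s23 x)).
Proof.
have s12H := s12_hom; have s23H := s23_hom.
apply: (triple_tensor_ext (F1 := s12 \o s23 \o s12) (F2 := s23 \o s12 \o s23)).
- exact: bimod_hom_comp (bimod_hom_comp s12H s23H) s12H.
- exact: bimod_hom_comp (bimod_hom_comp s23H s12H) s23H.
move=> z1 z2 z3 z1C z2C z3C /=.
by rewrite s12_center // s23_center // s12_center // s23_center // s12_center
  // s23_center.
Qed.

End CanonicalFlip.

Section Halfsym.
Variables (R : rcfType) (A : algType R[i]) (T : zmodType) (b : bimod_on A T).

Lemma lact_half_double x : lact b ((2 : R[i])^-1)%:A (x + x) = x.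
Proof.
have halfD : (2 : R[i])^-1 + 2^-1 = 1 by rewrite [RHS](splitr 1) div1r.
by rewrite lactDr -lactDl -scalerDl halfD scale1r lact1.
Qed.

Lemma lact_half_eq0 x : lact b ((2 : R[i])^-1)%:A x = 0 -> x = 0.
Proof.
by move=> hx0; rewrite -[x]lact_half_double lactDr hx0 addr0.
Qed.

Lemma halfsym_hom (s : T -> T) : bimod_hom b b s -> bimod_hom b b (halfsym b s).
Proof.
case=> sA sL sR; split=> [x y | k x | x k]; rewrite /halfsym.
- by rewrite sA addrACA -lactDr.
- by rewrite sL -lactDr -!lactM mulr_algl mulr_algr.
- by rewrite sR -ractDl lractA.
Qed.

Lemma Ran_halfsymP (s : T -> T) x : bimod_hom b b s -> (forall y, s (s y) = y) ->
  Ran (halfsym b s) x <-> s x = x.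
Proof.
case=> sA sL _ sK; split=> [[y ->] | sx].
  by rewrite /halfsym sL sA sK addrC.
by exists x; rewrite /halfsym sx lact_half_double.
Qed.

Lemma halfsym_iso_on (a c : T -> T) :
  bimod_hom b b a -> bimod_hom b b c ->
  (forall x, a (a x) = x) -> (forall x, c (c x) = x) ->
  (forall x, a (c (a x)) = c (a (c x))) ->
  bimod_iso_on b b (halfsym b a) (Ran (halfsym b c)) (Ran (halfsym b a)).
Proof.
move=> aH cH aK cK braid; have [aA _ _] := aH; have [cA _ _] := cH.
have [PA _ _] := halfsym_hom aH.
split; [exact: halfsym_hom | by move=> x _; exists x | |].
- move=> x y /(Ran_halfsymP _ cH cK) cx /(Ran_halfsymP _ cH cK) cy Pxy.
  have cd : c (x - y) = x - y by rewrite (additive_mapB cA) cx cy.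
  have ad : a (x - y) = - (x - y).
    apply/eqP; rewrite -addr_eq0; apply/eqP/lact_half_eq0.
    by rewrite addrC -/(halfsym b a _) (additive_mapB PA) Pxy subrr.
  have dN : x - y = - (x - y).
    move: (braid (x - y)); rewrite ad (additive_mapN cA) cd (additive_mapN aA) ad.
    by rewrite opprK (additive_mapN cA) cd.
  apply/eqP; rewrite -subr_eq0; apply/eqP.
  by rewrite -[x - y]lact_half_double {2}dN subrr (additive_map0 (lactDr b _)).
- move=> y /(Ran_halfsymP _ aH aK) ay.
  exists (y + (c y - a (c y))).
    apply/(Ran_halfsymP _ cH cK).
    by rewrite cA (additive_mapB cA) cK -braid ay addrCA.
  rewrite /halfsym aA (additive_mapB aA) aK ay -opprB.
  by rewrite addrACA addNr addr0 lact_half_double.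
Qed.

End Halfsym.

Theorem lemma3p6
  (R : realType) (A : algType R[i])
  (E : zmodType) (bE : bimod_on A E)
  (T2 : zmodType) (b2 : bimod_on A T2) (t2 : E -> E -> T2)
  (T3 : zmodType) (b3 : bimod_on A T3)
  (m : T2 -> E -> T3) (m' : E -> T2 -> T3)
  (sig : T2 -> T2) (s12 s23 : T3 -> T3) :
  centered bE ->
  is_tensor bE bE b2 t2 ->
  is_tensor b2 bE b3 m ->
  is_tensor bE b2 b3 m' ->
  (forall e f g, m (t2 e f) g = m' e (t2 f g)) ->
  bimod_hom b2 b2 sig ->
  (forall w h, center bE w -> center bE h -> sig (t2 w h) = t2 h w) ->
  additive_map s12 -> (forall x g, s12 (m x g) = m (sig x) g) ->
  additive_map s23 -> (forall e y, s23 (m' e y) = m' e (sig y)) ->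
  bimod_iso_on b3 b3 (halfsym b3 s12) (Ran (halfsym b3 s23)) (Ran (halfsym b3 s12)) /\
  bimod_iso_on b3 b3 (halfsym b3 s23) (Ran (halfsym b3 s12)) (Ran (halfsym b3 s23)).
Proof.
move=> cE t2T mT m'T mm' sigH sigC s12A s12m s23A s23m.
have s12H := s12_hom mT sigH s12A s12m.
have s23H := s23_hom m'T sigH s23A s23m.
have s12K := s12K cE t2T mT sigH sigC s12A s12m.
have s23K := s23K cE t2T mT m'T mm' sigH sigC s23A s23m.
have braid := s12_braid cE t2T mT m'T mm' sigH sigC s12A s12m s23A s23m.
split; first exact: (halfsym_iso_on s12H s23H s12K s23K braid).
exact: (halfsym_iso_on s23H s12H s23K s12K (fun x => esym (braid x))).
Qed.
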